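(* Let $G=(V,E)$ be a finite simple undirected graph and let $S$ be a total clique covering of $G$. Then there exists a coding sequence $\sigma$ of $G$ such that $S=S_\sigma$.
   Context: All graphs are finite, simple and undirected. A clique is a set of pairwise adjacent vertices; a set $S$ of cliques of $G$ is a total clique covering if every vertex lies in some member of $S$ and every edge has both endpoints in some member of $S$. For a finite sequence $\sigma=(a_1,\ldots,a_m)$ of positive integers, $G[\sigma]$ is the graph with vertices $v_1,\ldots,v_m$ ($a_i$ the label of $v_i$) where $v_iv_j$ is an edge iff $i\ne j$ and $\gcd(a_i,a_j)>1$. A coding sequence of a graph $G$ with $s\ge0$ isolated vertices: if $G$ has one vertex, $\sigma=(1)$; otherwise, with $G_1$ the graph obtained by deleting isolated vertices, take a non-decreasing finite sequence $\sigma_1$ of square-free integers $>1$ with $G_1\cong G[\sigma_1]$ and prefix it with $s$ entries equal to $1$; then $G\cong G[\sigma]$ with the isolated vertices labelled $1$. $\lambda(\sigma)$ is the lcm of the entries of $\sigma$ greater than $1$. Given a coding sequence $\sigma=(\lambda_1,\ldots,\lambda_m)$ of $G$ with vertices $v_i$ labelled $\lambda_i$, $s$ isolated vertices $v_1,\ldots,v_s$, and $p_1,\ldots,p_k$ the distinct prime factors of $\lambda(\sigma)$, the total clique covering corresponding to $\sigma$ is $S_\sigma=\{\{v_1\},\ldots,\{v_s\}\}\cup\{\{v_i : p_j\mid\lambda_i\} : j=1,\ldots,k\}$. *)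

From mathcomp Require Import all_boot.
Set Implicit Arguments. Unset Strict Implicit. Unset Printing Implicit Defensive.

Definition simple_graph (T : finType) (e : rel T) : Prop :=
  symmetric e /\ irreflexive e.

Definition isolated (T : finType) (e : rel T) (x : T) : bool :=
  [forall y, ~~ e x y].

Definition is_clique (T : finType) (e : rel T) (C : {set T}) : Prop :=
  C != set0 /\ (forall x y, x \in C -> y \in C -> x != y -> e x y).

Definition total_clique_covering (T : finType) (e : rel T)
    (S : {set {set T}}) : Prop :=
  [/\ forall C, C \in S -> is_clique e C,
      forall x, exists2 C, C \in S & x \in C
    & forall x y, e x y -> exists2 C, C \in S & (x \in C) && (y \in C)].

Definition squarefree (n : nat) : Prop :=
  forall p, prime p -> ~~ (p * p %| n).

(* Label of the i-th vertex v_(i+1) of G[sigma]. *)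
Definition lab (sigma : seq nat) (i : nat) : nat := nth 0 sigma i.

(* sigma is a coding sequence of the graph (T, e), and f : T -> indices
   is an isomorphism from G onto G[sigma] (vertex v_(i+1) <-> index i). *)
Definition coding_seq (T : finType) (e : rel T) (sigma : seq nat)
    (f : T -> nat) : Prop :=
  let s := #|[set x | isolated e x]| in
  [/\ size sigma = #|T|,
      injective f,
      (forall x, f x < size sigma)
    & (forall x y, x != y ->
         e x y = (1 < gcdn (lab sigma (f x)) (lab sigma (f y))))] /\
  [/\ (forall i, i < s -> lab sigma i = 1),
      (forall i, s <= i < size sigma ->
         1 < lab sigma i /\ squarefree (lab sigma i)),
      sorted leq (drop s sigma)
    & (#|T| = 1 -> sigma = [:: 1])].

Definition lambda (sigma : seq nat) : nat :=
  \big[lcmn/1]_(a <- sigma | 1 < a) a.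

(* The total clique covering corresponding to sigma, transported to G
   along the isomorphism f. *)
Definition S_sigma (T : finType) (e : rel T) (sigma : seq nat)
    (f : T -> nat) : {set {set T}} :=
  [set [set v] | v in [set x | isolated e x]] :|:
  [set:: map (fun p => [set x | p %| lab sigma (f x)]) (primes (lambda sigma))].

(* Give each clique of S other than the singletons of isolated vertices its own
   prime, and label every vertex by the product of the primes of the cliques
   containing it.  The labels are squarefree, a prime divides the labels of
   exactly the vertices of its clique, and two distinct vertices have a common
   prime factor iff some clique of S contains both, i.e. iff they are adjacent.
   Listing the isolated vertices first (label 1) and the others by increasing
   label gives a coding sequence whose prime cliques, together with the isolated
   singletons, are precisely S. *)

From mathcomp Require Import all_boot zify.

Set Implicit Arguments.
Unset Strict Implicit.
Unset Printing Implicit Defensive.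

Lemma Euclid_dvd_lcm m n p :
  prime p -> (p %| lcmn m n) = (p %| m) || (p %| n).
Proof.
move=> pr_p; apply/idP/idP => [p_lcm | /orP[p_m | p_n]].
- rewrite -Euclid_dvdM //; apply: dvdn_trans p_lcm _.
  by rewrite dvdn_lcm dvdn_mulr ?dvdn_mull.
- exact: dvdn_trans p_m (dvdn_lcml m n).
- exact: dvdn_trans p_n (dvdn_lcmr m n).
Qed.

Lemma Euclid_dvd_biglcm (I : Type) (r : seq I) (P : pred I) (F : I -> nat) p :
  prime p ->
  (p %| \big[lcmn/1]_(i <- r | P i) F i) = \big[orb/false]_(i <- r | P i) (p %| F i).
Proof.
move=> pr_p; apply: (big_morph (dvdn p)) => [m n|]; first exact: Euclid_dvd_lcm.
exact: Euclid_dvd1.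
Qed.

Lemma prime_dvd_prod_primes (I : finType) (P : pred I) (q : I -> nat) p :
  (forall i, prime (q i)) -> prime p -> p %| \prod_(i | P i) q i ->
  exists2 i, P i & p = q i.
Proof.
move=> pr_q pr_p; rewrite Euclid_dvd_prod // big_orE => /existsP[i /andP[Pi]].
by rewrite dvdn_prime2 // => /eqP p_qi; exists i.
Qed.

Definition next_prime (m : nat) : nat := s2val (prime_above m).

Lemma next_prime_gt m : m < next_prime m.
Proof. by rewrite /next_prime; case: (prime_above m). Qed.

Lemma next_prime_prime m : prime (next_prime m).
Proof. by rewrite /next_prime; case: (prime_above m). Qed.

Definition kth_prime (k : nat) : nat := iter k.+1 next_prime 0.

Lemma kth_prime_prime k : prime (kth_prime k).
Proof. exact: next_prime_prime. Qed.

Lemma kth_prime_inj : injective kth_prime.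
Proof.
have lt_kth_prime : {homo kth_prime : i j / i < j}.
  exact: homo_ltn ltn_trans (fun k => next_prime_gt (kth_prime k)).
by move=> i j eq_ij; case: (ltngtP i j) => // /lt_kth_prime; rewrite eq_ij ltnn.
Qed.

Section LabelSequence.

Variables (T : finType) (e : rel T) (L : T -> nat).
Hypothesis e_irr : irreflexive e.
Hypothesis L_adj : forall x y, x != y -> e x y = (1 < gcdn (L x) (L y)).
Hypothesis L_isolated : forall x, isolated e x -> L x = 1.
Hypothesis L_nonisolated : forall x, ~~ isolated e x -> 1 < L x /\ squarefree (L x).

Local Notation iso := [set x | isolated e x].

Definition label_order : seq T := enum iso ++ sort (relpre L leq) (enum (~: iso)).
Definition label_seq : seq nat := map L label_order.
Definition label_index (x : T) : nat := index x label_order.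

Lemma mem_label_order x : x \in label_order.
Proof. by rewrite mem_cat mem_sort !mem_enum in_setC orbN. Qed.

Lemma lab_label_index x : lab label_seq (label_index x) = L x.
Proof.
by rewrite /lab (nth_map x) ?index_mem ?mem_label_order // nth_index ?mem_label_order.
Qed.

Lemma label_seqE : label_seq = nseq #|iso| 1 ++ sort leq (map L (enum (~: iso))).
Proof.
rewrite /label_seq map_cat sort_map; congr (_ ++ _).
rewrite cardE -(size_map L); apply/all_pred1P/allP => _ /mapP[x + ->].
by rewrite mem_enum inE => /L_isolated ->.
Qed.

Lemma label_gt0 x : 0 < L x.
Proof.
by case: (boolP (isolated e x)) => [/L_isolated -> // | /L_nonisolated[/ltnW]].
Qed.

Lemma coding_seq_label_seq : coding_seq e label_seq label_index.
Proof.
have size_label_seq : size label_seq = #|T|.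
  by rewrite size_map size_cat size_sort -!cardE cardsC.
split; split.
- exact: size_label_seq.
- by move=> x y /(congr1 (nth x label_order)); rewrite !nth_index ?mem_label_order.
- by move=> x; rewrite size_map index_mem mem_label_order.
- by move=> x y /L_adj; rewrite !lab_label_index.
- by move=> i lt_i; rewrite /lab label_seqE nth_cat size_nseq lt_i nth_nseq lt_i.
- move=> i /andP[le_i lt_i].
  have lt_i' : i - #|iso| < size (sort leq (map L (enum (~: iso)))).
    by move: le_i lt_i; rewrite label_seqE size_cat size_nseq; lia.
  rewrite /lab label_seqE nth_cat size_nseq (ltnNge i) le_i /=.
  have := mem_nth 0 lt_i'; rewrite mem_sort => /mapP[x].
  by rewrite mem_enum !inE => /L_nonisolated ? ->.
- by rewrite label_seqE drop_size_cat ?size_nseq // sort_sorted //; apply: leq_total.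
- move=> T1; have iso_all : iso = setT.
    have /card_le1_eqP all_eq : #|T| <= 1 by rewrite T1.
    by apply/setP=> x; rewrite !inE; apply/forallP=> y; rewrite (all_eq y x) ?e_irr.
  by rewrite label_seqE iso_all setCT enum_set0 cardsT T1.
Qed.

Lemma mem_primes_lambda_label_seq p :
  (p \in primes (lambda label_seq)) = prime p && [exists x, p %| L x].
Proof.
have lambda_gt0 : 0 < lambda label_seq.
  by rewrite /lambda; elim/big_rec: _ => // a m lt1a m_gt0; rewrite lcmn_gt0 m_gt0 ltnW.
rewrite mem_primes lambda_gt0 andTb; case: (boolP (prime p)) => // pr_p.
rewrite /lambda (Euclid_dvd_biglcm _ _ _ pr_p) big_map big_has_cond.
apply/hasP/existsP => [[x _ /andP[_ p_Lx]] | [x p_Lx]]; first by exists x.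
exists x; first exact: mem_label_order.
apply/andP; split=> //.
exact: leq_trans (prime_gt1 pr_p) (dvdn_leq (label_gt0 x) p_Lx).
Qed.

Lemma S_sigma_label_seq :
  S_sigma e label_seq label_index =
  [set [set v] | v in iso] :|:
  [set:: map (fun p => [set x | p %| L x]) (primes (lambda label_seq))].
Proof.
have lab_L : (fun p => [set x | p %| lab label_seq (label_index x)]) =1
             (fun p => [set x | p %| L x]).
  by move=> p; apply/setP => x; rewrite !inE lab_label_index.
by rewrite /S_sigma (eq_map lab_L).
Qed.

End LabelSequence.

Section CliqueLabelling.

Variables (T : finType) (e : rel T) (S : {set {set T}}).
Hypothesis e_irr : irreflexive e.
Hypothesis S_cliques : forall C, C \in S -> is_clique e C.
Hypothesis S_covers_vertices : forall x, exists2 C, C \in S & x \in C.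
Hypothesis S_covers_edges : forall x y, e x y -> exists2 C, C \in S & (x \in C) && (y \in C).

Local Notation iso := [set x | isolated e x].

Definition trivial_cliques : {set {set T}} := [set [set v] | v in iso].
Definition prime_cliques : {set {set T}} := S :\: trivial_cliques.
Definition clique_prime (C : {set T}) : nat := kth_prime (enum_rank C).
Definition clique_label (x : T) : nat :=
  \prod_(C in prime_cliques | x \in C) clique_prime C.

Lemma clique_prime_prime C : prime (clique_prime C).
Proof. exact: kth_prime_prime. Qed.

Lemma clique_prime_inj : injective clique_prime.
Proof. by move=> C D /kth_prime_inj/ord_inj/enum_rank_inj. Qed.

Lemma clique_label_gt0 x : 0 < clique_label x.
Proof. by apply: prodn_gt0 => C; rewrite prime_gt0 ?clique_prime_prime. Qed.

Lemma prime_dvd_clique_label p x : prime p -> p %| clique_label x ->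
  exists2 C, (C \in prime_cliques) && (x \in C) & p = clique_prime C.
Proof. exact/prime_dvd_prod_primes/clique_prime_prime. Qed.

Lemma clique_prime_dvd_label C x :
  (clique_prime C %| clique_label x) = (C \in prime_cliques) && (x \in C).
Proof.
apply/idP/idP => [/(prime_dvd_clique_label (clique_prime_prime C)) | C_x].
  by case=> D D_x /clique_prime_inj ->.
by rewrite /clique_label (bigD1 C) //= dvdn_mulr.
Qed.

Lemma isolated_clique v C : v \in iso -> C \in S -> v \in C -> C = [set v].
Proof.
move=> v_iso C_S v_C; apply/setP=> y; rewrite inE; apply/idP/eqP => [y_C | -> //].
apply/eqP; apply: contraT => y_v; move: v_iso; rewrite inE => /forallP/(_ y).
by rewrite ((S_cliques C_S).2 v y v_C y_C) // eq_sym.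
Qed.

Lemma trivial_cliques_sub : trivial_cliques \subset S.
Proof.
apply/subsetP=> _ /imsetP[v v_iso ->].
by have [C C_S v_C] := S_covers_vertices v; rewrite -(isolated_clique v_iso C_S v_C).
Qed.

Lemma edge_prime_clique x y C :
  e x y -> C \in S -> x \in C -> y \in C -> C \in prime_cliques.
Proof.
move=> e_xy C_S x_C y_C; rewrite inE C_S andbT; apply/imsetP => -[v _ C_v].
by move: x_C y_C e_xy; rewrite C_v !inE => /eqP -> /eqP ->; rewrite e_irr.
Qed.

Lemma clique_label_adj x y :
  x != y -> e x y = (1 < gcdn (clique_label x) (clique_label y)).
Proof.
move=> x_y; apply/idP/idP => [e_xy | gcd_gt1].
  have [C C_S /andP[x_C y_C]] := S_covers_edges e_xy.
  have C_prime := edge_prime_clique e_xy C_S x_C y_C.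
  apply: leq_trans (prime_gt1 (clique_prime_prime C)) (dvdn_leq _ _).
    by rewrite gcdn_gt0 clique_label_gt0.
  by rewrite dvdn_gcd !clique_prime_dvd_label C_prime x_C y_C.
have pr_p := pdiv_prime gcd_gt1.
have p_x := dvdn_trans (pdiv_dvd _) (dvdn_gcdl (clique_label x) (clique_label y)).
have p_y := dvdn_trans (pdiv_dvd _) (dvdn_gcdr (clique_label x) (clique_label y)).
have [C /andP[C_prime x_C] p_C] := prime_dvd_clique_label pr_p p_x.
move: p_y; rewrite p_C clique_prime_dvd_label => /andP[_ y_C].
by move: C_prime; rewrite inE => /andP[_ /S_cliques[_ ->]].
Qed.

Lemma clique_label_isolated x : isolated e x -> clique_label x = 1.
Proof.
move=> x_iso; apply: big1 => C /andP[]; rewrite inE => /andP[C_triv C_S] x_C.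
by move: C_triv; rewrite (@isolated_clique x C) ?inE // imset_f ?inE.
Qed.

Lemma clique_label_squarefree x : squarefree (clique_label x).
Proof.
move=> p pr_p; apply/negP => pp_dvd.
have [C C_x p_C] := prime_dvd_clique_label pr_p (dvdn_trans (dvdn_mulr p (dvdnn p)) pp_dvd).
move: pp_dvd; rewrite /clique_label (bigD1 C) //= p_C.
rewrite dvdn_pmul2l ?prime_gt0 ?clique_prime_prime //.
case/(prime_dvd_prod_primes clique_prime_prime (clique_prime_prime C)) => D /andP[_ D_C].
by move/clique_prime_inj => C_D; rewrite C_D eqxx in D_C.
Qed.

Lemma clique_label_nonisolated x : ~~ isolated e x -> 1 < clique_label x.
Proof.
rewrite /isolated negb_forall => /existsP[y]; rewrite negbK => e_xy.
have [C C_S /andP[x_C y_C]] := S_covers_edges e_xy.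
apply: leq_trans (prime_gt1 (clique_prime_prime C)) (dvdn_leq (clique_label_gt0 x) _).
by rewrite clique_prime_dvd_label (edge_prime_clique e_xy C_S x_C y_C).
Qed.

Lemma prime_clique_support C :
  C \in prime_cliques -> [set x | clique_prime C %| clique_label x] = C.
Proof. by move=> C_prime; apply/setP=> x; rewrite inE clique_prime_dvd_label C_prime. Qed.

Lemma prime_cliques_from_primes n :
  (forall p, (p \in primes n) = prime p && [exists x, p %| clique_label x]) ->
  [set:: map (fun p => [set x | p %| clique_label x]) (primes n)] = prime_cliques.
Proof.
move=> primes_n; apply/setP=> X; rewrite inE; apply/mapP/idP => [[p] | X_prime].
  rewrite primes_n => /andP[pr_p /existsP[x /(prime_dvd_clique_label pr_p)]].
  by case=> C /andP[C_prime _] -> ->; rewrite prime_clique_support.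
exists (clique_prime X); last by rewrite prime_clique_support.
have X_S : X \in S by move: X_prime; rewrite inE => /andP[].
have [x x_X] := set0Pn _ (S_cliques X_S).1.
rewrite primes_n clique_prime_prime; apply/existsP; exists x.
by rewrite clique_prime_dvd_label X_prime.
Qed.

Lemma trivial_cliquesU_prime : trivial_cliques :|: prime_cliques = S.
Proof.
rewrite /prime_cliques setDE setUIr setUCr setIT.
exact/setUidPr/trivial_cliques_sub.
Qed.

End CliqueLabelling.

Theorem lemma2 (T : finType) (e : rel T) (S : {set {set T}}) :
  simple_graph e -> total_clique_covering e S ->
  exists (sigma : seq nat) (f : T -> nat),
    coding_seq e sigma f /\ S = S_sigma e sigma f.
Proof.
move=> [_ e_irr] [S_cliques S_covers_vertices S_covers_edges].
pose L := clique_label e S.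
have L_isolated x : isolated e x -> L x = 1 by apply: clique_label_isolated.
have L_nonisolated x : ~~ isolated e x -> 1 < L x /\ squarefree (L x).
  by split; [apply: clique_label_nonisolated | apply: clique_label_squarefree].
exists (label_seq e L), (label_index e L); split.
  by apply: coding_seq_label_seq => // x y; apply: clique_label_adj.
rewrite S_sigma_label_seq (prime_cliques_from_primes S_cliques).
  by rewrite trivial_cliquesU_prime.
exact: mem_primes_lambda_label_seq.
Qed.
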